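(* Let $(z,y)\in D'\times D$ satisfy the paraxial approximation, i.e. for $0<\eta\ll 1$, \[ y=\left( \eta^{\frac{1}{2}} y^\perp,y^\parallel \right)\in D, \qquad z=\left(\eta^{\frac{1}{2}} z^\perp,z^\parallel \right)\in D'. \] In the paraxial regime in dimension $3$ the point spread function has the expression \begin{multline*} F^{c}(z,y) = \eta^{-1} \left(\frac{c}{c^\star}\right)^2 \frac{\ell_0^4}{\left(16\pi^2|z||\varphi_c(y)| \right)^2} \int_{\mathcal{B}_0}\omega^2 e^{i\frac{2\omega}{\eta c}\left( |z| - |\varphi_c(y)| \right)} e^{i\frac{\omega}{c}\left(1-\left(\frac{c^\star}{c}\right)^2\right) \frac{\vert \varphi_c(y)^\perp\vert^2}{\vert \varphi_c(y)\vert}} \\ \mathcal{G}^2\left(\frac{\omega\ell_0}{c}\left( \frac{z^\perp}{|z|}- \frac{\varphi_c(y)^\perp}{|\varphi_c(y)|}\right) , \frac{\omega\ell_0^2}{c}\left( \frac{1}{|z|} - \left(\frac{c}{c^\star}\right)^2\frac{1}{|\varphi_c(y)|}\right)\right)\mathrm{d} \omega+ \mathcal{O}(1), \end{multline*} or equivalently \begin{multline*} F^{c}(z,y) = \eta^{-1} \left(\frac{c^\star}{c}\right)^2 \frac{\ell_0^4}{\left(16\pi^2|y||\varphi_c^{-1}(z)| \right)^2} \int_{\mathcal{B}_0}\omega^2 e^{i\frac{2\omega}{\eta c^\star}\left( |\varphi_c^{-1}(z)| - |y| \right)} e^{i\frac{\omega}{c^\star}\left(\left(\frac{c}{c^\star}\right)^2-1\right)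 \frac{\vert \varphi_c^{-1}(z)^\perp\vert^2}{\vert \varphi^{-1}_c(z)\vert}} \\ \mathcal{G}^2\left(\frac{\omega\ell_0}{c^\star}\left( \frac{\varphi_c^{-1}(z)^\perp}{|\varphi_c^{-1}(z)|}- \frac{y^\perp}{|y|}\right) , \frac{\omega\ell_0^2}{c^\star}\left( \left(\frac{c^\star}{c}\right)^2 \frac{1}{|\varphi_c^{-1}(z)|} - \frac{1}{|y|}\right)\right)\mathrm{d} \omega + \mathcal{O}(1), \end{multline*} where \[ \mathcal{G}(\xi_1,\xi_2) := \int_{[-1,1]^2} e^{-i x_e^\perp \cdot \xi_1 + i \frac{\left\vert x_e^\perp\right\vert^2}{2} \xi_2} \,\mathrm{d} x_e^\perp, \qquad \xi_1 \in \mathbb{R}^2,\ \xi_2\in \mathbb{R}, \] and \[ \varphi_c: D \to D',\qquad \varphi_c(y):= \left(\eta^\frac{1}{2} \left( \frac{c}{c^\star}\right)^2y^\perp, \frac{c}{c^\star} y^\parallel\right). \]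
   Context: Setting: a medium $D\subset\mathbb{R}^d$ (here $d=3$) with random micro-structured index $n_\varepsilon(x)=n(x/\varepsilon)$ whose homogenized (effective) index equals the background index $n^\star$; effective speed of sound $c^\star=1/\sqrt{n^\star}$, and the homogenized Green function is $G^\star=\Gamma^{\omega/c^\star}$, where $\Gamma^k$ is the outgoing free-space Helmholtz Green function with wavenumber $k$. A linear probe $\mathcal{P}=[-\ell,\ell]^{d-1}\times\{0\}$ records the measurements $M(x_e,x_r,\omega)=\omega^2\int_D (n_\varepsilon(y)-n^\star)G^\star(x_r,y)G^\star(x_e,y)\,\mathrm{d}y$ for $\omega$ in the band $\mathcal{B}$. The imaging function with backpropagation speed $c$ is $I^c(z)=\int_{\mathcal{P}\times\mathcal{P}\times\mathcal{B}}\overline{M(x_e,x_r,\omega)}\Gamma^{\omega/c}(z,x_e)\Gamma^{\omega/c}(z,x_r)\,\mathrm{d}x_e\mathrm{d}x_r\mathrm{d}\omega$ for $z$ in the virtual image domain $D'$; it equals $\int_D(n_\varepsilon(y)-n^\star)F^c(z,y)\,\mathrm{d}y$ with point spread function $F^c(z,y)=\int_{\mathcal{B}}\omega^2\left(\int_{\mathcal{P}}\Gamma^{\omega/c}(z,x_r)\overline{G^\star(y,x_r)}\,\mathrm{d}x_r\right)^2\mathrm{d}\omega$. Paraxial scaling with small parameter $\eta$: central frequency $\omega_c=\omega_0/\eta$, bandwidth $\mathcal{B}=\mathcal{B}_0/\eta$ (frequencies rescaled to the band $\mathcal{B}_0$), probe half-length $\ell=\eta^{1/2}\ell_0$, $\mathcal{P}=\eta^{1/2}\mathcal{P}_0$,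 $\varepsilon=\eta^\alpha$, $\alpha>0$. For a point $y$, $y^\perp\in\mathbb{R}^{d-1}$ denotes the transverse coordinate rescaled by $\eta^{-1/2}$ and $y^\parallel\ge 0$ denotes the axial (depth) coordinate. *)

From Stdlib Require Import Reals.
From Coquelicot Require Import Coquelicot.
Open Scope R_scope.

(* points of R^3 are triples (x1, x2, x3); x3 is the axial (depth) coordinate,
   the probe lies in the plane x3 = 0 *)
Definition pt := (R * R * R)%type.
Definition mkpt (a b c : R) : pt := (a, b, c).
Definition norm3 (x : pt) : R :=
  let '(a, b, c) := x in sqrt (a ^ 2 + b ^ 2 + c ^ 2).
Definition dist3 (x y : pt) : R :=
  let '(a, b, c) := x in let '(a', b', c') := y in
  sqrt ((a - a') ^ 2 + (b - b') ^ 2 + (c - c') ^ 2).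

Definition cexpi (t : R) : C := (cos t, sin t).

Definition Gamma (k : R) (x y : pt) : C :=
  Cmult (cexpi (k * dist3 x y)) (RtoC (/ (4 * PI * dist3 x y))).

Definition CInt (f : R -> C) (a b : R) : C := RInt (V := C_R_CompleteNormedModule) f a b.

(* point spread function F^c(z,y), with effective speed cs = c^star, probe
   P = [-l,l]^2 x {0}, frequency band B = [wa, wb] *)
Definition psf (c cs l wa wb : R) (z y : pt) : C :=
  CInt (fun w =>
    let I := CInt (fun x1 => CInt (fun x2 =>
               Cmult (Gamma (w / c) z (mkpt x1 x2 0))
                     (Cconj (Gamma (w / cs) y (mkpt x1 x2 0)))) (- l) l) (- l) l in
    Cmult (RtoC (w ^ 2)) (Cmult I I)) wa wb.

Definition calG (xi11 xi12 xi2 : R) : C :=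
  CInt (fun u1 => CInt (fun u2 =>
    cexpi (- (u1 * xi11 + u2 * xi12) + (u1 ^ 2 + u2 ^ 2) / 2 * xi2)) (-1) 1) (-1) 1.

Definition parax (eta p1 p2 q : R) : pt := mkpt (sqrt eta * p1) (sqrt eta * p2) q.

Definition phi_c (eta c cs yp1 yp2 ypar : R) : pt :=
  parax eta ((c / cs) ^ 2 * yp1) ((c / cs) ^ 2 * yp2) ((c / cs) * ypar).
Definition phi_c_inv (eta c cs zp1 zp2 zpar : R) : pt :=
  parax eta ((cs / c) ^ 2 * zp1) ((cs / c) ^ 2 * zp2) ((cs / c) * zpar).

(* first leading term; (zp, zpar), (yp, ypar) are the rescaled coordinates,
   band B0 = [a, b], probe half-length l0 (rescaled) *)
Definition lead1 (eta c cs l0 a b zp1 zp2 zpar yp1 yp2 ypar : R) : C :=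
  let z := parax eta zp1 zp2 zpar in
  let ph := phi_c eta c cs yp1 yp2 ypar in
  let nz := norm3 z in let nph := norm3 ph in
  let ph1 := (c / cs) ^ 2 * yp1 in let ph2 := (c / cs) ^ 2 * yp2 in
  Cmult (RtoC (/ eta * (c / cs) ^ 2 * l0 ^ 4 / (16 * PI ^ 2 * nz * nph) ^ 2))
   (CInt (fun w =>
     let g := calG (w * l0 / c * (zp1 / nz - ph1 / nph))
                   (w * l0 / c * (zp2 / nz - ph2 / nph))
                   (w * l0 ^ 2 / c * (/ nz - (c / cs) ^ 2 * / nph)) in
     Cmult (RtoC (w ^ 2))
      (Cmult (cexpi (2 * w / (eta * c) * (nz - nph)))
       (Cmult (cexpi (w / c * (1 - (cs / c) ^ 2) * (ph1 ^ 2 + ph2 ^ 2) / nph))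
              (Cmult g g)))) a b).

Definition lead2 (eta c cs l0 a b zp1 zp2 zpar yp1 yp2 ypar : R) : C :=
  let y := parax eta yp1 yp2 ypar in
  let ps := phi_c_inv eta c cs zp1 zp2 zpar in
  let ny := norm3 y in let nps := norm3 ps in
  let ps1 := (cs / c) ^ 2 * zp1 in let ps2 := (cs / c) ^ 2 * zp2 in
  Cmult (RtoC (/ eta * (cs / c) ^ 2 * l0 ^ 4 / (16 * PI ^ 2 * ny * nps) ^ 2))
   (CInt (fun w =>
     let g := calG (w * l0 / cs * (ps1 / nps - yp1 / ny))
                   (w * l0 / cs * (ps2 / nps - yp2 / ny))
                   (w * l0 ^ 2 / cs * ((cs / c) ^ 2 * / nps - / ny)) in
     Cmult (RtoC (w ^ 2))
      (Cmult (cexpi (2 * w / (eta * cs) * (nps - ny)))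
       (Cmult (cexpi (w / cs * ((c / cs) ^ 2 - 1) * (ps1 ^ 2 + ps2 ^ 2) / nps))
              (Cmult g g)))) a b).

(* Substituting w = om / eta and x = sqrt eta * l0 * u turns the point spread function into
   int_a^b (om^2 l0^4 / eta) J(om)^2 dom, where J(om) is the integral over u in [-1,1]^2 of the
   product of the two Green functions.  A second order (Fresnel) expansion of both distances
   replaces this kernel by s e^{i Phi(om, u)} with an error O(eta), uniformly in om and u, and
   the probe integral of s e^{i Phi} is exactly the calG factor of the leading term.  The O(eta)
   error on J is multiplied by the prefactor 1/eta, which leaves an O(1) remainder. *)

From Stdlib Require Import Reals Lra Psatz ClassicalEpsilon.
From Coquelicot Require Import Coquelicot.
Open Scope R_scope.

Notation Ccontinuous := (continuous (U := C_R_CompleteNormedModule)).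
Notation Cex_RInt := (ex_RInt (V := C_R_CompleteNormedModule)).

Lemma continuous_pair {T U V : UniformSpace} (f : T -> U) (g : T -> V) (p : T) :
  continuous f p -> continuous g p -> continuous (fun x => (f x, g x)) p.
Proof.
  intros Hf Hg. apply filterlim_locally. intros eps.
  apply (proj1 (filterlim_locally _ _)) with (eps := eps) in Hf.
  apply (proj1 (filterlim_locally _ _)) with (eps := eps) in Hg.
  generalize (filter_and _ _ Hf Hg). apply filter_imp. now intros x [H1 H2].
Qed.

Lemma continuous_fst_of {T U V : UniformSpace} (f : T -> U * V) (p : T) :
  continuous f p -> continuous (fun x => fst (f x)) p.
Proof.
  intros Hf. apply filterlim_locally. intros eps.
  apply (proj1 (filterlim_locally _ _)) with (eps := eps) in Hf.
  revert Hf. apply filter_imp. now intros x [H1 _].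
Qed.

Lemma continuous_snd_of {T U V : UniformSpace} (f : T -> U * V) (p : T) :
  continuous f p -> continuous (fun x => snd (f x)) p.
Proof.
  intros Hf. apply filterlim_locally. intros eps.
  apply (proj1 (filterlim_locally _ _)) with (eps := eps) in Hf.
  revert Hf. apply filter_imp. now intros x [_ H2].
Qed.

Lemma continuous_pow_of {T : UniformSpace} (f : T -> R) (n : nat) (p : T) :
  continuous f p -> continuous (fun x => f x ^ n) p.
Proof.
  intros Hf. induction n as [|n IH]; simpl.
  - apply continuous_const.
  - exact (continuous_mult (K := R_AbsRing) f _ p Hf IH).
Qed.

Section ComplexContinuity.

Context {T : UniformSpace}.

Lemma continuous_C_of (f g : T -> R) (p : T) :
  continuous f p -> continuous g p -> Ccontinuous (fun x => ((f x, g x) : C)) p.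
Proof. exact (continuous_pair (U := R_UniformSpace) (V := R_UniformSpace) f g p). Qed.

Lemma continuous_Re_of (f : T -> C) (p : T) : Ccontinuous f p -> continuous (fun x => fst (f x)) p.
Proof. exact (continuous_fst_of (U := R_UniformSpace) (V := R_UniformSpace) f p). Qed.

Lemma continuous_Im_of (f : T -> C) (p : T) : Ccontinuous f p -> continuous (fun x => snd (f x)) p.
Proof. exact (continuous_snd_of (U := R_UniformSpace) (V := R_UniformSpace) f p). Qed.

Lemma continuous_Cmult (f g : T -> C) (p : T) :
  Ccontinuous f p -> Ccontinuous g p -> Ccontinuous (fun x => Cmult (f x) (g x)) p.
Proof.
  intros Hf Hg.
  pose proof (continuous_Re_of f p Hf). pose proof (continuous_Im_of f p Hf).
  pose proof (continuous_Re_of g p Hg). pose proof (continuous_Im_of g p Hg).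
  apply continuous_C_of.
  - apply (continuous_minus (V := R_NormedModule));
      now apply (continuous_mult (K := R_AbsRing)).
  - apply (continuous_plus (V := R_NormedModule));
      now apply (continuous_mult (K := R_AbsRing)).
Qed.

Lemma continuous_Cconj (f : T -> C) (p : T) :
  Ccontinuous f p -> Ccontinuous (fun x => Cconj (f x)) p.
Proof.
  intros Hf. apply continuous_C_of; [now apply continuous_Re_of|].
  apply (continuous_opp (V := R_NormedModule)). now apply continuous_Im_of.
Qed.

Lemma continuous_RtoC (f : T -> R) (p : T) : continuous f p -> Ccontinuous (fun x => RtoC (f x)) p.
Proof. intros Hf. apply continuous_C_of; [exact Hf | apply continuous_const]. Qed.

Lemma continuous_cexpi (f : T -> R) (p : T) : continuous f p -> Ccontinuous (fun x => cexpi (f x)) p.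
Proof.
  intros Hf. apply continuous_C_of.
  - apply (continuous_comp f cos); [exact Hf | apply continuous_cos].
  - apply (continuous_comp f sin); [exact Hf | apply continuous_sin].
Qed.

End ComplexContinuity.

(* Leaves the side conditions [_ <> 0] of divisions. *)
Ltac continuity_step :=
  match goal with
  | |- continuous (fun _ => ?c) _ => apply continuous_const
  | |- continuous (fun x => x) _ => apply continuous_id
  | |- continuous (fun x => Cmult (@?f x) (@?g x)) _ => apply (continuous_Cmult f g)
  | |- continuous (fun x => Cminus (@?f x) (@?g x)) _ =>
      apply (continuous_minus (V := C_R_NormedModule) f g)
  | |- continuous (fun x => Cconj (@?f x)) _ => apply (continuous_Cconj f)
  | |- continuous (fun x => RtoC (@?f x)) _ => apply (continuous_RtoC f)
  | |- continuous (fun x => cexpi (@?f x)) _ => apply (continuous_cexpi f)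
  | |- continuous (fun x => Rplus (@?f x) (@?g x)) _ =>
      apply (continuous_plus (V := R_NormedModule) f g)
  | |- continuous (fun x => Rminus (@?f x) (@?g x)) _ =>
      apply (continuous_minus (V := R_NormedModule) f g)
  | |- continuous (fun x => Ropp (@?f x)) _ => apply (continuous_opp (V := R_NormedModule) f)
  | |- continuous (fun x => Rmult (@?f x) (@?g x)) _ => apply (continuous_mult (K := R_AbsRing) f g)
  | |- continuous (fun x => Rdiv (@?f x) (@?g x)) _ =>
      apply (continuous_mult (K := R_AbsRing) f (fun x => / g x))
  | |- continuous (fun x => Rinv (@?f x)) _ =>
      apply (continuous_comp f Rinv); [| apply continuous_Rinv]
  | |- continuous (fun x => sqrt (@?f x)) _ => apply (continuous_comp f sqrt); [| apply continuous_sqrt]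
  | |- continuous (fun x => pow (@?f x) _) _ => apply (continuous_pow_of f)
  | |- continuous fst _ => apply (continuous_fst_of (fun x => x)), continuous_id
  | |- continuous snd _ => apply (continuous_snd_of (fun x => x)), continuous_id
  | |- continuous (fun x => fst (@?f x)) _ => apply (continuous_fst_of f)
  | |- continuous (fun x => snd (@?f x)) _ => apply (continuous_snd_of f)
  end.

Ltac continuity := repeat (continuity_step; cbn beta).

Definition jointly_continuous {T U V : UniformSpace} (f : T -> U -> V) : Prop :=
  forall z : T * U, continuous (fun z => f (fst z) (snd z)) z.

Notation Cjointly_continuous := (jointly_continuous (V := C_R_CompleteNormedModule)).

Section ParametricIntegrals.

Context {T : UniformSpace} {V : CompleteNormedModule R_AbsRing}.
Variable f : T -> R -> V.
Hypothesis f_cont : jointly_continuous f.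

Lemma continuous_section (q : T) (x : R) : continuous (f q) x.
Proof.
  apply (continuous_comp (fun x => (q, x)) (fun z => f (fst z) (snd z))); [|apply f_cont].
  apply continuous_pair; [apply continuous_const | apply continuous_id].
Qed.

Lemma ex_RInt_section (q : T) (c d : R) : ex_RInt (f q) c d.
Proof. apply ex_RInt_continuous. intros. apply continuous_section. Qed.

Lemma uniform_continuity_on_segment (c d : R) (p : T) (eps : posreal) :
  exists delta : posreal, forall q x, ball p delta q -> c <= x <= d ->
    norm (minus (f q x) (f p x)) <= eps.
Proof.
  pose proof (@norm_factor_gt_0 R_AbsRing V) as Hnf.
  set (e := eps / (2 * @norm_factor R_AbsRing V)).
  assert (He : 0 < e) by (apply Rdiv_lt_0_compat; [apply cond_pos | lra]).
  assert (Hloc : forall t : R, exists del : posreal, forall q x,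
             ball p del q -> ball t del x -> ball (f p t) e (f q x)).
  { intros t. destruct (proj1 (filterlim_locally _ _) (f_cont (p, t)) (mkposreal e He)) as [del Hdel].
    exists del. intros q x H1 H2. exact (Hdel (q, x) (conj H1 H2)). }
  set (delta := fun t => proj1_sig (constructive_indefinite_description _ (Hloc t))).
  assert (Hdelta : forall t q x, ball p (delta t) q -> ball t (delta t) x -> ball (f p t) e (f q x)).
  { intros t. unfold delta. now destruct (constructive_indefinite_description _ (Hloc t)). }
  destruct (compactness_value_1d c d delta) as [dd Hdd].
  exists dd. intros q x Hq Hx. apply Rnot_lt_le. intros Hlt.
  apply (Hdd x Hx). intros [t [_ [Hxt Hdt]]].
  assert (Hqx : ball (f p t) e (f q x)) by (apply Hdelta; [apply ball_le with dd|]; assumption).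
  assert (Hpx : ball (f p t) e (f p x)) by (apply Hdelta; [apply ball_center | assumption]).
  assert (Hball : ball (f p x) (e + e) (f q x))
    by (apply ball_triangle with (f p t); [apply ball_sym|]; assumption).
  pose proof (norm_compat2 (f p x) (f q x) (mkposreal _ (Rplus_lt_0_compat _ _ He He)) Hball) as Hn.
  simpl in Hn. replace (norm_factor * (e + e)) with (pos eps) in Hn by (unfold e; field; lra).
  exact (Rlt_asym _ _ Hlt Hn).
Qed.

Lemma continuous_RInt_param (c d : R) (p : T) :
  c <= d -> continuous (fun q => RInt (f q) c d) p.
Proof.
  intros Hcd. apply filterlim_locally. intros eps.
  set (M := eps / (2 * (d - c + 1))).
  assert (HM : 0 < M) by (apply Rdiv_lt_0_compat; [apply cond_pos | lra]).
  destruct (uniform_continuity_on_segment c d p (mkposreal M HM)) as [dd Hdd].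
  exists dd. intros q Hq. apply (@norm_compat1 R_AbsRing V).
  rewrite <- (RInt_minus (V := V)) by apply ex_RInt_section.
  apply Rle_lt_trans with ((d - c) * M).
  - apply (norm_RInt_le_const (fun x => minus (f q x) (f p x))); auto.
    apply RInt_correct, ex_RInt_minus; apply ex_RInt_section.
  - assert (HdM : (d - c + 1) * M = eps / 2) by (unfold M; field; lra).
    pose proof (cond_pos eps). nra.
Qed.

End ParametricIntegrals.

Lemma RInt_dilate_sym {V : CompleteNormedModule R_AbsRing} (g : R -> V) (l : R) :
  (forall x, continuous g x) -> RInt g (- l) l = scal l (RInt (fun u => g (l * u)) (-1) 1).
Proof.
  intros Hg.
  rewrite <- RInt_scal.
  2:{ apply ex_RInt_continuous. intros u _.
      apply (continuous_comp (fun u => l * u) g); [continuity | apply Hg]. }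
  transitivity (RInt g (l * -1 + 0) (l * 1 + 0)); [f_equal; ring|].
  rewrite <- RInt_comp_lin by (apply ex_RInt_continuous; intros; apply Hg).
  apply RInt_ext. intros u _. now rewrite Rplus_0_r.
Qed.

Definition CInt2 (H : R -> R -> C) (c d : R) : C := CInt (fun x1 => CInt (H x1) c d) c d.

Lemma is_RInt_Cmult (f : R -> C) (be : C) (a b : R) (l : C) :
  is_RInt (V := C_R_CompleteNormedModule) f a b l ->
  is_RInt (V := C_R_CompleteNormedModule) (fun x => Cmult be (f x)) a b (Cmult be l).
Proof.
  intros Hl. destruct be as [b1 b2], l as [l1 l2].
  pose proof (is_RInt_fct_extend_fst (U := R_NormedModule) (V := R_NormedModule) _ _ _ _ Hl) as H1.
  pose proof (is_RInt_fct_extend_snd (U := R_NormedModule) (V := R_NormedModule) _ _ _ _ Hl) as H2.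
  apply (is_RInt_fct_extend_pair (U := R_NormedModule) (V := R_NormedModule)); simpl in *.
  - apply (is_RInt_minus (V := R_NormedModule)); now apply (is_RInt_scal (V := R_NormedModule)).
  - apply (is_RInt_plus (V := R_NormedModule)); now apply (is_RInt_scal (V := R_NormedModule)).
Qed.

Lemma CInt_Cmult (f : R -> C) (be : C) (a b : R) :
  Cex_RInt f a b ->
  CInt (fun x => Cmult be (f x)) a b = Cmult be (CInt f a b).
Proof.
  intros Hex. apply (is_RInt_unique (V := C_R_CompleteNormedModule)).
  now apply is_RInt_Cmult, (RInt_correct (V := C_R_CompleteNormedModule)).
Qed.

Lemma CInt_norm_le (f : R -> C) (c d M : R) :
  c <= d -> Cex_RInt f c d ->
  (forall x, c <= x <= d -> Cmod (f x) <= M) -> Cmod (CInt f c d) <= (d - c) * M.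
Proof.
  intros Hcd Hex Hb. rewrite Cmod_norm.
  apply (norm_RInt_le_const (V := C_R_CompleteNormedModule) f c d); auto.
  - intros x Hx. rewrite <- Cmod_norm. auto.
  - now apply (RInt_correct (V := C_R_CompleteNormedModule)).
Qed.

Section DoubleIntegrals.

Variable H : R -> R -> C.
Hypothesis H_cont : Cjointly_continuous H.
Variables c d : R.
Hypothesis Hcd : c <= d.

Lemma ex_RInt_CInt2_inner (x1 : R) : Cex_RInt (H x1) c d.
Proof. exact (ex_RInt_section (V := C_R_CompleteNormedModule) H H_cont x1 c d). Qed.

Lemma continuous_CInt2_inner (x1 : R) :
  Ccontinuous (fun x1 => CInt (H x1) c d) x1.
Proof. exact (continuous_RInt_param (V := C_R_CompleteNormedModule) H H_cont c d x1 Hcd). Qed.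

Lemma ex_RInt_CInt2_outer : Cex_RInt (fun x1 => CInt (H x1) c d) c d.
Proof. apply ex_RInt_continuous. intros. apply continuous_CInt2_inner. Qed.

Lemma CInt2_Cmult (be : C) : Cmult be (CInt2 H c d) = CInt2 (fun u1 u2 => Cmult be (H u1 u2)) c d.
Proof.
  unfold CInt2. rewrite <- CInt_Cmult by apply ex_RInt_CInt2_outer.
  apply (RInt_ext (V := C_R_CompleteNormedModule)). intros x _.
  symmetry. apply CInt_Cmult, ex_RInt_CInt2_inner.
Qed.

Lemma CInt2_norm_le (M : R) :
  (forall u1 u2, c <= u1 <= d -> c <= u2 <= d -> Cmod (H u1 u2) <= M) ->
  Cmod (CInt2 H c d) <= (d - c) * ((d - c) * M).
Proof.
  intros Hb. apply CInt_norm_le; auto using ex_RInt_CInt2_outer.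
  intros x Hx. apply CInt_norm_le; auto using ex_RInt_CInt2_inner.
Qed.

End DoubleIntegrals.

Lemma CInt2_minus (H1 H2 : R -> R -> C) (c d : R) : c <= d ->
  Cjointly_continuous H1 ->
  Cjointly_continuous H2 ->
  Cminus (CInt2 H1 c d) (CInt2 H2 c d) = CInt2 (fun u1 u2 => Cminus (H1 u1 u2) (H2 u1 u2)) c d.
Proof.
  intros Hcd C1 C2. unfold CInt2, CInt.
  change (Cminus ?x ?y) with (@minus C_R_CompleteNormedModule x y) at 1.
  rewrite <- (RInt_minus (V := C_R_CompleteNormedModule)) by (now apply ex_RInt_CInt2_outer).
  apply (RInt_ext (V := C_R_CompleteNormedModule)). intros x _.
  now rewrite <- (RInt_minus (V := C_R_CompleteNormedModule)) by (now apply ex_RInt_CInt2_inner).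
Qed.

Lemma continuous_CInt2_param {T : UniformSpace} (H : T -> R -> R -> C) (c d : R) (p : T) : c <= d ->
  Cjointly_continuous (fun (qx : T * R) x2 => H (fst qx) (snd qx) x2) ->
  Ccontinuous (fun q => CInt2 (H q) c d) p.
Proof.
  intros Hcd Hc. unfold CInt2.
  apply (continuous_RInt_param (V := C_R_CompleteNormedModule) (fun q x1 => CInt (H q x1) c d)); auto.
  intros z.
  exact (continuous_RInt_param (V := C_R_CompleteNormedModule)
           (fun (qx : T * R) x2 => H (fst qx) (snd qx) x2) Hc c d z Hcd).
Qed.

Lemma jointly_continuous_at {T : UniformSpace} (H : T -> R -> R -> C) (q : T) :
  Cjointly_continuous (fun (qx : T * R) x2 => H (fst qx) (snd qx) x2) ->
  Cjointly_continuous (H q).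
Proof.
  intros Hc z.
  apply (continuous_comp (fun z : R * R => ((q, fst z), snd z))
           (fun z => H (fst (fst z)) (snd (fst z)) (snd z))); [|apply Hc].
  apply continuous_pair; [apply continuous_pair|]; continuity.
Qed.

Lemma jointly_continuous_dilate (H : R -> R -> C) (l : R) :
  Cjointly_continuous H ->
  Cjointly_continuous (fun u1 u2 => H (l * u1) (l * u2)).
Proof.
  intros Hc z.
  apply (continuous_comp (fun z : R * R => (l * fst z, l * snd z)) (fun z => H (fst z) (snd z)));
    [|apply Hc].
  apply continuous_pair; continuity.
Qed.

Lemma CInt2_dilate (H : R -> R -> C) (l : R) : 0 <= l ->
  Cjointly_continuous H ->
  CInt2 H (- l) l = scal (l * l) (CInt2 (fun u1 u2 => H (l * u1) (l * u2)) (-1) 1).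
Proof.
  intros Hl Hc. unfold CInt2, CInt.
  assert (Hinner : forall x1, RInt (V := C_R_CompleteNormedModule) (H x1) (- l) l
                      = scal l (RInt (V := C_R_CompleteNormedModule) (fun u2 => H x1 (l * u2)) (-1) 1)).
  { intros x1. apply RInt_dilate_sym. intros x.
    exact (continuous_section (V := C_R_CompleteNormedModule) H Hc x1 x). }
  rewrite RInt_dilate_sym by (intros; apply continuous_CInt2_inner; auto; lra).
  rewrite (RInt_ext (V := C_R_CompleteNormedModule) _ _ _ _ (fun u1 _ => Hinner (l * u1))).
  rewrite RInt_scal, scal_assoc; [reflexivity|].
  apply ex_RInt_CInt2_outer; [now apply jointly_continuous_dilate | lra].
Qed.

Lemma Cmod_cexpi (p : R) : Cmod (cexpi p) = 1.
Proof.
  unfold Cmod, cexpi. simpl fst; simpl snd.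
  replace (cos p ^ 2 + sin p ^ 2) with 1; [apply sqrt_1|].
  pose proof (sin2_cos2 p) as H. unfold Rsqr in H. simpl. lra.
Qed.

Lemma cexpi_add (p q : R) : Cmult (cexpi p) (cexpi q) = cexpi (p + q).
Proof.
  unfold cexpi, Cmult. simpl. rewrite cos_plus, sin_plus.
  apply injective_projections; simpl; ring.
Qed.

Lemma Cmod_cexpi_mul (P r : R) : Cmod (Cmult (cexpi P) (RtoC r)) = Rabs r.
Proof. now rewrite Cmod_mult, Cmod_cexpi, Cmod_R, Rmult_1_l. Qed.

Lemma polar_mul_conj (P Q A B : R) :
  Cmult (Cmult (cexpi P) (RtoC A)) (Cconj (Cmult (cexpi Q) (RtoC B)))
  = Cmult (RtoC (A * B)) (cexpi (P - Q)).
Proof.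
  unfold cexpi, Cmult, Cconj, RtoC. simpl. rewrite cos_minus, sin_minus.
  apply injective_projections; simpl; ring.
Qed.

Lemma Rabs_sin_sub_le (p q : R) : Rabs (sin p - sin q) <= Rabs (p - q).
Proof.
  destruct (MVT_abs sin cos q p) as [x [Hx _]]; [intros; apply derivable_pt_lim_sin|].
  rewrite Hx. pose proof (COS_bound x). pose proof (Rabs_pos (p - q)).
  assert (Rabs (cos x) <= 1) by (apply Rabs_le; lra). nra.
Qed.

Lemma Rabs_cos_sub_le (p q : R) : Rabs (cos p - cos q) <= Rabs (p - q).
Proof.
  destruct (MVT_abs cos (fun x => - sin x) q p) as [x [Hx _]]; [intros; apply derivable_pt_lim_cos|].
  rewrite Hx. pose proof (SIN_bound x). pose proof (Rabs_pos (p - q)).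
  assert (Rabs (- sin x) <= 1) by (apply Rabs_le; lra). nra.
Qed.

Lemma Cmod_le_Rabs_add (x y : R) : Cmod (x, y) <= Rabs x + Rabs y.
Proof.
  unfold Cmod. cbn [fst snd].
  pose proof (Rabs_pos x). pose proof (Rabs_pos y).
  rewrite <- (sqrt_pow2 (Rabs x + Rabs y)) by lra.
  apply sqrt_le_1_alt. rewrite <- (pow2_abs x), <- (pow2_abs y). simpl. nra.
Qed.

Lemma Cmod_cexpi_sub_le (p q : R) : Cmod (Cminus (cexpi p) (cexpi q)) <= 2 * Rabs (p - q).
Proof.
  unfold cexpi, Cminus, Cplus, Copp. simpl.
  eapply Rle_trans; [apply Cmod_le_Rabs_add|].
  pose proof (Rabs_sin_sub_le p q). pose proof (Rabs_cos_sub_le p q). unfold Rminus in *. lra.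
Qed.

Lemma Cmod_polar_sub_le (A s P Q : R) :
  Cmod (Cminus (Cmult (cexpi P) (RtoC A)) (Cmult (cexpi Q) (RtoC s)))
    <= Rabs (A - s) + Rabs s * (2 * Rabs (P - Q)).
Proof.
  replace (Cminus (Cmult (cexpi P) (RtoC A)) (Cmult (cexpi Q) (RtoC s)))
    with (Cplus (Cmult (cexpi P) (RtoC (A - s))) (Cmult (Cminus (cexpi P) (cexpi Q)) (RtoC s)))
    by (unfold Cminus, Cplus, Cmult, Copp, RtoC; apply injective_projections; simpl; ring).
  eapply Rle_trans; [apply Cmod_triangle|].
  rewrite Cmod_cexpi_mul, Cmod_mult, Cmod_R.
  apply Rplus_le_compat_l. rewrite Rmult_comm.
  apply Rmult_le_compat_l; [apply Rabs_pos | apply Cmod_cexpi_sub_le].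
Qed.

Lemma Cmod_mul_conj_sub_le (x y x' y' : C) :
  Cmod (Cminus (Cmult x (Cconj y)) (Cmult x' (Cconj y')))
    <= Cmod (Cminus x x') * Cmod y + Cmod x' * Cmod (Cminus y y').
Proof.
  replace (Cminus (Cmult x (Cconj y)) (Cmult x' (Cconj y')))
    with (Cplus (Cmult (Cminus x x') (Cconj y)) (Cmult x' (Cconj (Cminus y y'))))
    by (destruct x, y, x', y'; unfold Cminus, Cplus, Cmult, Copp, Cconj;
        apply injective_projections; simpl; ring).
  eapply Rle_trans; [apply Cmod_triangle|].
  rewrite !Cmod_mult, !Cmod_conj. lra.
Qed.

Lemma Cmod_sqr_sub_le (J J' : C) :
  Cmod (Cminus (Cmult J J) (Cmult J' J')) <= Cmod (Cminus J J') * (Cmod J + Cmod J').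
Proof.
  replace (Cminus (Cmult J J) (Cmult J' J')) with (Cmult (Cminus J J') (Cplus J J'))
    by (destruct J, J'; unfold Cminus, Cplus, Cmult, Copp; apply injective_projections; simpl; ring).
  rewrite Cmod_mult. apply Rmult_le_compat_l; [apply Cmod_ge_0 | apply Cmod_triangle].
Qed.

Lemma sqrt_sub_first_order_le (D S q : R) : 0 < q -> q <= D -> q <= S ->
  Rabs (D - S - (D ^ 2 - S ^ 2) / (2 * S)) <= (D ^ 2 - S ^ 2) ^ 2 / (2 * q ^ 3).
Proof.
  intros Hq HD HS.
  replace (D - S - (D ^ 2 - S ^ 2) / (2 * S))
    with (- ((D ^ 2 - S ^ 2) ^ 2 / (2 * S * (D + S) ^ 2))) by (field; lra).
  rewrite Rabs_Ropp, Rabs_right.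
  2:{ apply Rle_ge, Rdiv_le_0_compat; [apply pow2_ge_0|].
      apply Rmult_lt_0_compat; [lra | apply pow_lt; lra]. }
  apply Rmult_le_compat_l; [apply pow2_ge_0|].
  apply Rinv_le_contravar; [apply Rmult_lt_0_compat; [lra | apply pow_lt; lra]|].
  assert (q ^ 3 <= S * (D + S) ^ 2) by (simpl; apply Rmult_le_compat; nra). lra.
Qed.

Lemma Rinv_sub_le (D S q : R) : 0 < q -> q <= D -> q <= S ->
  Rabs (/ D - / S) <= Rabs (D ^ 2 - S ^ 2) / q ^ 3.
Proof.
  intros Hq HD HS.
  replace (/ D - / S) with (- ((D ^ 2 - S ^ 2) / (D * S * (D + S)))) by (field; lra).
  rewrite Rabs_Ropp. unfold Rdiv. rewrite Rabs_mult, (Rabs_right (/ _)).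
  2:{ apply Rle_ge, Rlt_le, Rinv_0_lt_compat. apply Rmult_lt_0_compat; [nra | lra]. }
  apply Rmult_le_compat_l; [apply Rabs_pos|].
  apply Rinv_le_contravar; [apply pow_lt; lra|].
  assert (q * q <= D * S) by nra. simpl. nra.
Qed.

Lemma norm3_parax_sq (eta p1 p2 q : R) : 0 <= eta ->
  norm3 (parax eta p1 p2 q) ^ 2 = q ^ 2 + eta * (p1 ^ 2 + p2 ^ 2).
Proof.
  intros He. unfold norm3, parax, mkpt.
  rewrite pow2_sqrt by (apply Rplus_le_le_0_compat; [apply Rplus_le_le_0_compat|]; apply pow2_ge_0).
  rewrite !Rpow_mult_distr, pow2_sqrt by exact He. ring.
Qed.

Lemma dist3_parax_probe_sq (eta l0 p1 p2 q u1 u2 : R) : 0 <= eta ->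
  dist3 (parax eta p1 p2 q) (mkpt (sqrt eta * l0 * u1) (sqrt eta * l0 * u2) 0) ^ 2
    = q ^ 2 + eta * ((p1 - l0 * u1) ^ 2 + (p2 - l0 * u2) ^ 2).
Proof.
  intros He. unfold dist3, parax, mkpt.
  rewrite pow2_sqrt by (apply Rplus_le_le_0_compat; [apply Rplus_le_le_0_compat|]; apply pow2_ge_0).
  replace (sqrt eta * p1 - sqrt eta * l0 * u1) with (sqrt eta * (p1 - l0 * u1)) by ring.
  replace (sqrt eta * p2 - sqrt eta * l0 * u2) with (sqrt eta * (p2 - l0 * u2)) by ring.
  rewrite !Rpow_mult_distr, pow2_sqrt by exact He. ring.
Qed.

Lemma norm3_parax_pos (eta p1 p2 q : R) : 0 <= eta -> 0 < q -> 0 < norm3 (parax eta p1 p2 q).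
Proof.
  intros He Hq. apply sqrt_lt_R0.
  replace ((sqrt eta * p1) ^ 2) with (eta * p1 ^ 2)
    by (rewrite Rpow_mult_distr, pow2_sqrt by exact He; reflexivity).
  replace ((sqrt eta * p2) ^ 2) with (eta * p2 ^ 2)
    by (rewrite Rpow_mult_distr, pow2_sqrt by exact He; reflexivity).
  pose proof (pow2_ge_0 p1). pose proof (pow2_ge_0 p2). pose proof (pow_lt q 2 Hq). nra.
Qed.

Lemma norm3_parax_ge (eta p1 p2 q : R) : 0 <= eta -> 0 <= q -> q <= norm3 (parax eta p1 p2 q).
Proof.
  intros He Hq. pose proof (norm3_parax_sq eta p1 p2 q He).
  assert (0 <= eta * (p1 ^ 2 + p2 ^ 2)) by (apply Rmult_le_pos; [|apply Rplus_le_le_0_compat]; nra).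
  assert (0 <= norm3 (parax eta p1 p2 q)) by apply sqrt_pos. nra.
Qed.

Lemma Rdiv_le_inv (k N q : R) : 0 < k -> 0 < q -> k * q <= N -> 0 < k / N <= / q.
Proof.
  intros Hk Hq HN. assert (0 < k * q) by nra.
  replace (k / N) with (/ (N / k)) by (field; lra).
  split; [apply Rinv_0_lt_compat, Rdiv_lt_0_compat; lra|].
  apply Rinv_le_contravar; [lra|]. apply (Rmult_le_reg_r k); [lra|].
  replace (N / k * k) with N by (field; lra). lra.
Qed.

Lemma le_of_sqr_le (q D : R) : 0 <= D -> 0 < q -> q ^ 2 <= D ^ 2 -> q <= D.
Proof. intros. nra. Qed.

(* Second order expansion D ~ S + (D^2 - S^2) / (2 S), with S = N / k, of the phase om D / (eta v)
   of a Green function, D being the distance from [parax eta p1 p2 q] to the probe point.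
   Expanding around S rather than around the distance to the probe centre costs nothing (any S
   with S^2 = q^2 + O(eta) leaves an O(eta) phase error); with k = c / c* and N = |phi_c(y)| it
   yields the paper's formula. *)
Definition fresnel_phase (eta om v k p1 p2 N l0 u1 u2 : R) : R :=
  om * (N / k) / (eta * v)
  + om * ((p1 - l0 * u1) ^ 2 + (p2 - l0 * u2) ^ 2 - k ^ 2 * (p1 ^ 2 + p2 ^ 2)) / (2 * v * (N / k)).

Definition defect_bound (k p1 p2 l0 : R) : R :=
  2 * (p1 ^ 2 + p2 ^ 2) + 4 * l0 ^ 2 + k ^ 2 * (p1 ^ 2 + p2 ^ 2).

Definition fresnel_const (b v k p1 p2 q l0 : R) : R :=
  (defect_bound k p1 p2 l0 / q ^ 3 + b * defect_bound k p1 p2 l0 ^ 2 / (v * q ^ 4)) / (4 * PI).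

Lemma defect_le (k p1 p2 l0 u1 u2 : R) : Rabs u1 <= 1 -> Rabs u2 <= 1 ->
  Rabs ((p1 - l0 * u1) ^ 2 + (p2 - l0 * u2) ^ 2 - k ^ 2 * (p1 ^ 2 + p2 ^ 2))
    <= defect_bound k p1 p2 l0.
Proof.
  intros Hu1 Hu2. unfold defect_bound.
  assert (u1 ^ 2 <= 1) by (rewrite <- pow2_abs; pose proof (Rabs_pos u1); nra).
  assert (u2 ^ 2 <= 1) by (rewrite <- pow2_abs; pose proof (Rabs_pos u2); nra).
  assert (Hd : (p1 - l0 * u1) ^ 2 + (p2 - l0 * u2) ^ 2 <= 2 * (p1 ^ 2 + p2 ^ 2) + 4 * l0 ^ 2).
  { pose proof (pow2_ge_0 (p1 + l0 * u1)). pose proof (pow2_ge_0 (p2 + l0 * u2)).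
    assert (l0 ^ 2 * u1 ^ 2 <= l0 ^ 2 * 1) by (apply Rmult_le_compat_l; [apply pow2_ge_0 | lra]).
    assert (l0 ^ 2 * u2 ^ 2 <= l0 ^ 2 * 1) by (apply Rmult_le_compat_l; [apply pow2_ge_0 | lra]).
    nra. }
  assert (0 <= (p1 - l0 * u1) ^ 2 + (p2 - l0 * u2) ^ 2) by (apply Rplus_le_le_0_compat; apply pow2_ge_0).
  assert (0 <= k ^ 2 * (p1 ^ 2 + p2 ^ 2))
    by (apply Rmult_le_pos; [|apply Rplus_le_le_0_compat]; apply pow2_ge_0).
  apply Rabs_le. split; lra.
Qed.

Lemma fresnel_const_nonneg (b v k p1 p2 q l0 : R) : 0 <= b -> 0 < v -> 0 < q ->
  0 <= fresnel_const b v k p1 p2 q l0.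
Proof.
  intros Hb Hv Hq. pose proof PI_RGT_0.
  assert (0 <= defect_bound k p1 p2 l0).
  { unfold defect_bound. pose proof (pow2_ge_0 p1). pose proof (pow2_ge_0 p2).
    pose proof (pow2_ge_0 l0). pose proof (pow2_ge_0 k). nra. }
  unfold fresnel_const.
  pose proof (pow_lt q 3 Hq). pose proof (pow_lt q 4 Hq).
  apply Rdiv_le_0_compat; [|lra]. apply Rplus_le_le_0_compat.
  - apply Rdiv_le_0_compat; lra.
  - apply Rdiv_le_0_compat; [apply Rmult_le_pos; [lra | apply pow2_ge_0] | nra].
Qed.

Section FresnelApproximation.

Variables eta om b v k l0 p1 p2 q u1 u2 : R.
Hypotheses (Heta : 0 < eta) (Hom : 0 <= om <= b) (Hv : 0 < v) (Hk : 0 < k) (Hq : 0 < q)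
  (Hu1 : Rabs u1 <= 1) (Hu2 : Rabs u2 <= 1).

Let D := dist3 (parax eta p1 p2 q) (mkpt (sqrt eta * l0 * u1) (sqrt eta * l0 * u2) 0).
Let N := norm3 (parax eta (k ^ 2 * p1) (k ^ 2 * p2) (k * q)).
Let delta := (p1 - l0 * u1) ^ 2 + (p2 - l0 * u2) ^ 2 - k ^ 2 * (p1 ^ 2 + p2 ^ 2).
Let M := defect_bound k p1 p2 l0.

Lemma fresnel_radii : q <= D /\ q <= N / k /\ D ^ 2 - (N / k) ^ 2 = eta * delta.
Proof.
  assert (HD : D ^ 2 = q ^ 2 + eta * ((p1 - l0 * u1) ^ 2 + (p2 - l0 * u2) ^ 2))
    by (apply dist3_parax_probe_sq; lra).
  assert (HS : (N / k) ^ 2 = q ^ 2 + eta * (k ^ 2 * (p1 ^ 2 + p2 ^ 2))).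
  { unfold N, Rdiv. rewrite Rpow_mult_distr, norm3_parax_sq by lra. field. lra. }
  assert (0 <= N / k) by (apply Rdiv_le_0_compat; [apply sqrt_pos | lra]).
  assert (0 <= D) by apply sqrt_pos.
  assert (0 <= (p1 - l0 * u1) ^ 2 + (p2 - l0 * u2) ^ 2) by (apply Rplus_le_le_0_compat; apply pow2_ge_0).
  assert (0 <= k ^ 2 * (p1 ^ 2 + p2 ^ 2))
    by (apply Rmult_le_pos; [|apply Rplus_le_le_0_compat]; apply pow2_ge_0).
  split; [|split]; [apply le_of_sqr_le; nra .. | rewrite HD, HS; unfold delta; ring].
Qed.

Lemma fresnel_norm_pos : 0 < N.
Proof. apply norm3_parax_pos; nra. Qed.

Lemma fresnel_amplitude_error : Rabs (/ D - k / N) <= eta * (M / q ^ 3).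
Proof.
  destruct fresnel_radii as [HqD [HqS HDS]]. pose proof fresnel_norm_pos.
  replace (k / N) with (/ (N / k)) by (field; lra).
  eapply Rle_trans; [apply (Rinv_sub_le D (N / k) q); assumption|].
  rewrite HDS, Rabs_mult, (Rabs_right eta) by lra.
  unfold Rdiv. rewrite Rmult_assoc.
  apply Rmult_le_compat_l; [lra|]. apply Rmult_le_compat_r.
  - apply Rlt_le, Rinv_0_lt_compat, pow_lt, Hq.
  - apply defect_le; assumption.
Qed.

Lemma fresnel_phase_error :
  Rabs (om / eta / v * D - fresnel_phase eta om v k p1 p2 N l0 u1 u2)
    <= eta * (b * M ^ 2 / (2 * v * q ^ 3)).
Proof.
  destruct fresnel_radii as [HqD [HqS HDS]]. pose proof fresnel_norm_pos.
  replace (om / eta / v * D - fresnel_phase eta om v k p1 p2 N l0 u1 u2)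
    with (om / (eta * v) * (D - N / k - (D ^ 2 - (N / k) ^ 2) / (2 * (N / k))))
    by (rewrite HDS; unfold fresnel_phase, delta; field; repeat split; lra).
  rewrite Rabs_mult, Rabs_right by (apply Rle_ge, Rdiv_le_0_compat; nra).
  eapply Rle_trans.
  { apply Rmult_le_compat_l; [apply Rdiv_le_0_compat; nra|].
    apply (sqrt_sub_first_order_le D (N / k) q); assumption. }
  rewrite HDS.
  assert (Hd : delta ^ 2 <= M ^ 2).
  { rewrite <- (pow2_abs delta). apply pow_incr. split; [apply Rabs_pos | apply defect_le; assumption]. }
  assert (0 < 2 * v * q ^ 3) by (pose proof (pow_lt q 3 Hq); nra).
  replace (om / (eta * v) * ((eta * delta) ^ 2 / (2 * q ^ 3)))
    with (eta * (om * delta ^ 2 / (2 * v * q ^ 3))) by (field; repeat split; lra).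
  apply Rmult_le_compat_l; [lra|]. unfold Rdiv.
  apply Rmult_le_compat_r; [apply Rlt_le, Rinv_0_lt_compat; lra|].
  apply Rmult_le_compat; [lra | apply pow2_ge_0 | lra | exact Hd].
Qed.

Lemma Gamma_fresnel_approx :
  Cmod (Cminus
    (Gamma (om / eta / v) (parax eta p1 p2 q) (mkpt (sqrt eta * l0 * u1) (sqrt eta * l0 * u2) 0))
               (Cmult (cexpi (fresnel_phase eta om v k p1 p2 N l0 u1 u2)) (RtoC (k / N / (4 * PI)))))
    <= eta * fresnel_const b v k p1 p2 q l0.
Proof.
  destruct fresnel_radii as [HqD [HqS _]]. pose proof fresnel_norm_pos. pose proof PI_RGT_0.
  pose proof fresnel_amplitude_error as HA. pose proof fresnel_phase_error as HP.
  assert (HkN : 0 < k / N <= / q).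
  { split; [apply Rdiv_lt_0_compat; lra|].
    replace (k / N) with (/ (N / k)) by (field; lra). apply Rinv_le_contravar; lra. }
  unfold Gamma. fold D.
  eapply Rle_trans; [apply Cmod_polar_sub_le|].
  replace (/ (4 * PI * D) - k / N / (4 * PI)) with ((/ D - k / N) / (4 * PI)) by (field; lra).
  unfold Rdiv at 1. rewrite Rabs_mult.
  rewrite (Rabs_right (/ (4 * PI))) by (apply Rle_ge, Rlt_le, Rinv_0_lt_compat; lra).
  rewrite (Rabs_right (k / N / (4 * PI))) by (apply Rle_ge, Rdiv_le_0_compat; lra).
  assert (Hfac : k / N * (2 * Rabs (om / eta / v * D - fresnel_phase eta om v k p1 p2 N l0 u1 u2))
                   <= eta * (b * M ^ 2 / (v * q ^ 4))).
  { apply Rle_trans with (/ q * (2 * (eta * (b * M ^ 2 / (2 * v * q ^ 3))))).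
    - apply Rmult_le_compat; try lra.
      pose proof (Rabs_pos (om / eta / v * D - fresnel_phase eta om v k p1 p2 N l0 u1 u2)). lra.
    - right. field. lra. }
  unfold fresnel_const. fold M.
  replace (k / N / (4 * PI)) with (k / N * / (4 * PI)) by reflexivity.
  assert (0 < / (4 * PI)) by (apply Rinv_0_lt_compat; lra).
  unfold Rdiv at 3. nra.
Qed.

End FresnelApproximation.

Definition psf_kernel (c cs : R) (z y : pt) (w x1 x2 : R) : C :=
  Cmult (Gamma (w / c) z (mkpt x1 x2 0)) (Cconj (Gamma (w / cs) y (mkpt x1 x2 0))).

Definition probe_integral (c cs eta l0 : R) (z y : pt) (om : R) : C :=
  CInt2 (fun u1 u2 => psf_kernel c cs z y (om / eta) (sqrt eta * l0 * u1) (sqrt eta * l0 * u2)) (-1) 1.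

Lemma continuous_psf_kernel (c cs : R) (z y : pt) : 0 < snd z -> 0 < snd y ->
  Cjointly_continuous
    (fun (wx : R * R) x2 => psf_kernel c cs z y (fst wx) (snd wx) x2).
Proof.
  destruct z as [[z1 z2] z3], y as [[y1 y2] y3]. simpl. intros Hz Hy p.
  unfold psf_kernel, Gamma, dist3, mkpt. pose proof PI_RGT_0.
  continuity; apply Rgt_not_eq, Rmult_lt_0_compat; try lra; apply sqrt_lt_R0;
    (apply Rplus_le_lt_0_compat; [apply Rplus_le_le_0_compat; apply pow2_ge_0 | apply pow_lt; lra]).
Qed.

Lemma jointly_continuous_rescaled_kernel (c cs eta l0 : R) (z y : pt) :
  0 < snd z -> 0 < snd y ->
  Cjointly_continuous (fun (p : R * R) u2 =>
    psf_kernel c cs z y (fst p / eta) (sqrt eta * l0 * snd p) (sqrt eta * l0 * u2)).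
Proof.
  intros Hz Hy p.
  apply (continuous_comp
           (fun p : R * R * R =>
              ((fst (fst p) / eta, sqrt eta * l0 * snd (fst p)), sqrt eta * l0 * snd p))
           (fun p => psf_kernel c cs z y (fst (fst p)) (snd (fst p)) (snd p))).
  - apply continuous_pair; [apply continuous_pair|]; continuity.
  - now apply continuous_psf_kernel.
Qed.

Lemma psf_rescaled (c cs eta l0 a b : R) (z y : pt) :
  0 < eta -> 0 <= l0 -> 0 < snd z -> 0 < snd y ->
  psf c cs (sqrt eta * l0) (a / eta) (b / eta) z y
  = CInt (fun om => Cmult (RtoC (om ^ 2 * l0 ^ 4 / eta))
            (Cmult (probe_integral c cs eta l0 z y om) (probe_integral c cs eta l0 z y om))) a b.
Proof.
  intros He Hl0 Hz Hy.
  set (l := sqrt eta * l0).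
  assert (Hl : 0 <= l) by (apply Rmult_le_pos; [apply sqrt_pos | exact Hl0]).
  set (I := fun w => CInt2 (psf_kernel c cs z y w) (- l) l).
  set (P := fun w => Cmult (RtoC (w ^ 2)) (Cmult (I w) (I w))).
  change (psf c cs l (a / eta) (b / eta) z y) with (CInt P (a / eta) (b / eta)).
  assert (HP : forall w, Ccontinuous P w).
  { intros w. unfold P, I. continuity; apply continuous_CInt2_param; try lra;
      now apply continuous_psf_kernel. }
  unfold CInt.
  transitivity (RInt (V := C_R_CompleteNormedModule) P (/ eta * a + 0) (/ eta * b + 0));
    [f_equal; field; lra|].
  rewrite <- RInt_comp_lin by (apply ex_RInt_continuous; intros; apply HP).
  apply (RInt_ext (V := C_R_CompleteNormedModule)). intros om _.
  unfold P, I. rewrite CInt2_dilate; [|exact Hl|].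
  2:{ apply (jointly_continuous_at (fun w x1 x2 => psf_kernel c cs z y w x1 x2)).
      now apply continuous_psf_kernel. }
  replace (/ eta * om + 0) with (om / eta) by (field; lra).
  assert (Hll : l * l = eta * l0 ^ 2)
    by (unfold l; replace eta with (sqrt eta * sqrt eta) at 3 by (apply sqrt_sqrt; lra); ring).
  rewrite Hll. unfold l. fold (probe_integral c cs eta l0 z y om).
  destruct (probe_integral c cs eta l0 z y om) as [x1 x2].
  apply injective_projections; simpl; unfold prod_scal, scal; simpl; unfold mult; simpl; field; lra.
Qed.

Lemma continuous_calG_of {T : UniformSpace} (f g h : T -> R) (p : T) :
  continuous f p -> continuous g p -> continuous h p ->
  Ccontinuous (fun x => calG (f x) (g x) (h x)) p.
Proof.
  intros Hf Hg Hh.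
  apply (continuous_comp (fun x => ((f x, g x), h x))
           (fun xi : R * R * R => calG (fst (fst xi)) (snd (fst xi)) (snd xi)));
    [apply continuous_pair; [apply continuous_pair|]; assumption|].
  apply (continuous_CInt2_param (fun (xi : R * R * R) u1 u2 =>
           cexpi (- (u1 * fst (fst xi) + u2 * snd (fst xi)) + (u1 ^ 2 + u2 ^ 2) / 2 * snd xi)));
    [lra|]. intros z. continuity.
Qed.

Definition lead_term (pref : R) (t1 t2 xi11 xi12 xi2 : R -> R) (a b : R) : C :=
  Cmult (RtoC pref) (CInt (fun w =>
    Cmult (RtoC (w ^ 2)) (Cmult (cexpi (t1 w)) (Cmult (cexpi (t2 w))
      (Cmult (calG (xi11 w) (xi12 w) (xi2 w)) (calG (xi11 w) (xi12 w) (xi2 w)))))) a b).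

Definition fresnel_probe_integral (s : R) (Phi : R -> R -> R -> R) (om : R) : C :=
  CInt2 (fun u1 u2 => Cmult (RtoC s) (cexpi (Phi om u1 u2))) (-1) 1.

Lemma fresnel_probe_integral_calG (s : R) (Phi : R -> R -> R -> R) (t xi11 xi12 xi2 om : R) :
  (forall u1 u2, t + (- (u1 * xi11 + u2 * xi12) + (u1 ^ 2 + u2 ^ 2) / 2 * xi2) = Phi om u1 u2) ->
  fresnel_probe_integral s Phi om = Cmult (Cmult (RtoC s) (cexpi t)) (calG xi11 xi12 xi2).
Proof.
  intros HPhi. unfold calG. fold (CInt2 (fun u1 u2 =>
    cexpi (- (u1 * xi11 + u2 * xi12) + (u1 ^ 2 + u2 ^ 2) / 2 * xi2)) (-1) 1).
  rewrite CInt2_Cmult by (lra || (intros z; continuity)).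
  unfold fresnel_probe_integral, CInt2, CInt.
  apply (RInt_ext (V := C_R_CompleteNormedModule)). intros u1 _.
  apply (RInt_ext (V := C_R_CompleteNormedModule)). intros u2 _.
  now rewrite <- HPhi, <- cexpi_add, Cmult_assoc.
Qed.

Section ProbeIntegralStability.

Variables K K' : R -> R -> R -> C.
Variables l0 eta a b E Mk : R.
Hypotheses (Hab : 0 <= a <= b) (Heta : 0 < eta <= 1) (HE : 0 <= E)
  (HK : Cjointly_continuous (fun (p : R * R) u2 => K (fst p) (snd p) u2))
  (HK' : Cjointly_continuous (fun (p : R * R) u2 => K' (fst p) (snd p) u2))
  (Happrox : forall om u1 u2, a <= om <= b -> -1 <= u1 <= 1 -> -1 <= u2 <= 1 ->
     Cmod (Cminus (K om u1 u2) (K' om u1 u2)) <= eta * E)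
  (Hbound : forall om u1 u2, a <= om <= b -> -1 <= u1 <= 1 -> -1 <= u2 <= 1 ->
     Cmod (K' om u1 u2) <= Mk).

Let J om := CInt2 (K om) (-1) 1.
Let J' om := CInt2 (K' om) (-1) 1.
Let weighted (I : R -> C) om := Cmult (RtoC (om ^ 2 * l0 ^ 4 / eta)) (Cmult (I om) (I om)).

Lemma probe_integrals_le (om : R) : a <= om <= b ->
  Cmod (Cminus (J om) (J' om)) <= 4 * (eta * E) /\ Cmod (J' om) <= 4 * Mk /\ Cmod (J om) <= 4 * (Mk + E).
Proof.
  intros Hom.
  assert (HKom := jointly_continuous_at K om HK). assert (HK'om := jointly_continuous_at K' om HK').
  assert (Hsq : forall M, 4 * M = (1 - -1) * ((1 - -1) * M)) by (intros; ring).
  split; [|split]; rewrite Hsq; unfold J, J'.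
  - rewrite CInt2_minus by (assumption || lra).
    apply CInt2_norm_le; [|lra|]; auto. intros z. continuity; [apply HKom | apply HK'om].
  - apply CInt2_norm_le; auto; lra.
  - apply CInt2_norm_le; auto; [lra|]. intros u1 u2 Hu1 Hu2.
    replace (K om u1 u2) with (Cplus (K' om u1 u2) (Cminus (K om u1 u2) (K' om u1 u2)))
      by (destruct (K om u1 u2), (K' om u1 u2); unfold Cplus, Cminus, Copp;
          apply injective_projections; simpl; ring).
    eapply Rle_trans; [apply Cmod_triangle|].
    pose proof (Happrox om u1 u2 Hom Hu1 Hu2). pose proof (Hbound om u1 u2 Hom Hu1 Hu2). nra.
Qed.

Lemma continuous_weighted_probe_sqr (H : R -> R -> R -> C) (om : R) :
  Cjointly_continuous (fun (p : R * R) u2 => H (fst p) (snd p) u2) ->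
  Ccontinuous (weighted (fun om => CInt2 (H om) (-1) 1)) om.
Proof.
  intros HH. unfold weighted.
  continuity; apply (continuous_CInt2_param H); (lra || exact HH).
Qed.

Lemma weighted_probe_sqr_sub_le_pointwise (om : R) : a <= om <= b ->
  Cmod (Cminus (weighted J om) (weighted J' om)) <= b ^ 2 * l0 ^ 4 * (4 * E) * (8 * Mk + 4 * E).
Proof.
  intros Hom. destruct (probe_integrals_le om Hom) as [HJJ' [HJ' HJ]].
  set (w := om ^ 2 * l0 ^ 4 / eta).
  assert (Hl0 : 0 <= l0 ^ 4) by (replace (l0 ^ 4) with ((l0 ^ 2) ^ 2) by ring; apply pow2_ge_0).
  assert (Hw : 0 <= w) by (apply Rdiv_le_0_compat; [apply Rmult_le_pos; [apply pow2_ge_0|]|]; lra).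
  assert (HMk : 0 <= Mk) by (eapply Rle_trans; [apply Cmod_ge_0 | apply (Hbound om 0 0); lra]).
  replace (Cminus (weighted J om) (weighted J' om))
    with (Cmult (RtoC w) (Cminus (Cmult (J om) (J om)) (Cmult (J' om) (J' om))))
    by (unfold weighted; fold w; generalize (J om) (J' om); intros [x1 x2] [y1 y2];
        apply injective_projections; simpl; ring).
  rewrite Cmod_mult, Cmod_R, Rabs_right by lra.
  eapply Rle_trans; [apply Rmult_le_compat_l; [exact Hw | apply Cmod_sqr_sub_le]|].
  apply Rle_trans with (w * (4 * (eta * E) * (4 * (Mk + E) + 4 * Mk))).
  { apply Rmult_le_compat_l; [exact Hw|].
    pose proof (Cmod_ge_0 (J om)). pose proof (Cmod_ge_0 (J' om)).
    apply Rmult_le_compat; [apply Cmod_ge_0 | lra | exact HJJ' | lra]. }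
  replace (w * (4 * (eta * E) * (4 * (Mk + E) + 4 * Mk)))
    with (om ^ 2 * (l0 ^ 4 * (4 * E) * (8 * Mk + 4 * E))) by (unfold w; field; lra).
  replace (b ^ 2 * l0 ^ 4 * (4 * E) * (8 * Mk + 4 * E))
    with (b ^ 2 * (l0 ^ 4 * (4 * E) * (8 * Mk + 4 * E))) by ring.
  apply Rmult_le_compat_r; [|apply pow_incr; lra].
  apply Rmult_le_pos; [apply Rmult_le_pos|]; lra.
Qed.

Lemma weighted_probe_sqr_sub_le :
  Cmod (Cminus (CInt (weighted J) a b) (CInt (weighted J') a b))
    <= (b - a) * (b ^ 2 * l0 ^ 4 * (4 * E) * (8 * Mk + 4 * E)).
Proof.
  assert (HexJ : Cex_RInt (weighted J) a b)
    by (apply ex_RInt_continuous; intros; exact (continuous_weighted_probe_sqr K _ HK)).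
  assert (HexJ' : Cex_RInt (weighted J') a b)
    by (apply ex_RInt_continuous; intros; exact (continuous_weighted_probe_sqr K' _ HK')).
  unfold CInt. rewrite <- (RInt_minus (V := C_R_CompleteNormedModule)) by assumption.
  apply CInt_norm_le; [lra | now apply (ex_RInt_minus (V := C_R_CompleteNormedModule))|].
  exact weighted_probe_sqr_sub_le_pointwise.
Qed.

End ProbeIntegralStability.

Definition kernel_const (b c cs kz ky zp1 zp2 zpar yp1 yp2 ypar l0 : R) : R :=
  fresnel_const b c kz zp1 zp2 zpar l0 / (4 * PI * ypar)
  + fresnel_const b cs ky yp1 yp2 ypar l0 / (4 * PI * zpar).

Lemma psf_kernel_fresnel_approx (c cs eta om b l0 kz ky zp1 zp2 zpar yp1 yp2 ypar u1 u2 : R) :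
  0 < c -> 0 < cs -> 0 < eta -> 0 <= om <= b -> 0 < kz -> 0 < ky -> 0 < zpar -> 0 < ypar ->
  Rabs u1 <= 1 -> Rabs u2 <= 1 ->
  let Nz := norm3 (parax eta (kz ^ 2 * zp1) (kz ^ 2 * zp2) (kz * zpar)) in
  let Ny := norm3 (parax eta (ky ^ 2 * yp1) (ky ^ 2 * yp2) (ky * ypar)) in
  Cmod (Cminus
    (psf_kernel c cs (parax eta zp1 zp2 zpar) (parax eta yp1 yp2 ypar)
       (om / eta) (sqrt eta * l0 * u1) (sqrt eta * l0 * u2))
    (Cmult (RtoC (kz / Nz * (ky / Ny) / (16 * PI ^ 2)))
       (cexpi (fresnel_phase eta om c kz zp1 zp2 Nz l0 u1 u2
               - fresnel_phase eta om cs ky yp1 yp2 Ny l0 u1 u2))))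
  <= eta * kernel_const b c cs kz ky zp1 zp2 zpar yp1 yp2 ypar l0.
Proof.
  intros Hc Hcs He Hom Hkz Hky Hz Hy Hu1 Hu2 Nz Ny. pose proof PI_RGT_0.
  destruct (fresnel_radii eta kz l0 zp1 zp2 zpar u1 u2) as [_ [HNz _]]; try assumption.
  destruct (fresnel_radii eta ky l0 yp1 yp2 ypar u1 u2) as [HDy [HNy _]]; try assumption.
  fold Nz in HNz. fold Ny in HNy.
  assert (0 < Nz) by (apply norm3_parax_pos; nra). assert (0 < Ny) by (apply norm3_parax_pos; nra).
  set (Dy := dist3 (parax eta yp1 yp2 ypar) (mkpt (sqrt eta * l0 * u1) (sqrt eta * l0 * u2) 0)) in *.
  replace (kz / Nz * (ky / Ny) / (16 * PI ^ 2)) with (kz / Nz / (4 * PI) * (ky / Ny / (4 * PI)))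
    by (field; repeat split; lra).
  rewrite <- polar_mul_conj. unfold psf_kernel.
  eapply Rle_trans; [apply Cmod_mul_conj_sub_le|].
  assert (HGy : Cmod (Gamma (om / eta / cs) (parax eta yp1 yp2 ypar)
                  (mkpt (sqrt eta * l0 * u1) (sqrt eta * l0 * u2) 0)) <= / (4 * PI * ypar)).
  { unfold Gamma. fold Dy.
    rewrite Cmod_cexpi_mul, Rabs_right by (apply Rle_ge, Rlt_le, Rinv_0_lt_compat; nra).
    apply Rinv_le_contravar; nra. }
  assert (HAz : Cmod (Cmult (cexpi (fresnel_phase eta om c kz zp1 zp2 Nz l0 u1 u2))
                           (RtoC (kz / Nz / (4 * PI))))
                  <= / (4 * PI * zpar)).
  { rewrite Cmod_cexpi_mul, Rabs_right
      by (apply Rle_ge, Rdiv_le_0_compat; [apply Rdiv_le_0_compat|]; nra).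
    replace (kz / Nz / (4 * PI)) with (/ (4 * PI * (Nz / kz))) by (field; repeat split; lra).
    apply Rinv_le_contravar; nra. }
  pose proof (Gamma_fresnel_approx eta om b c kz l0 zp1 zp2 zpar u1 u2) as Hz'.
  pose proof (Gamma_fresnel_approx eta om b cs ky l0 yp1 yp2 ypar u1 u2) as Hy'.
  specialize (Hz' He Hom Hc Hkz Hz Hu1 Hu2). specialize (Hy' He Hom Hcs Hky Hy Hu1 Hu2).
  fold Nz in Hz'. fold Ny in Hy'.
  apply Rle_trans with (eta * fresnel_const b c kz zp1 zp2 zpar l0 * / (4 * PI * ypar)
                        + / (4 * PI * zpar) * (eta * fresnel_const b cs ky yp1 yp2 ypar l0)).
  - apply Rplus_le_compat; apply Rmult_le_compat; try apply Cmod_ge_0; assumption.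
  - right. unfold kernel_const, Rdiv. ring.
Qed.

Lemma lead_term_eq (pref s l0 eta a b : R) (t1 t2 xi11 xi12 xi2 : R -> R) (Phi : R -> R -> R -> R) :
  0 < eta ->
  (forall w, continuous t1 w) -> (forall w, continuous t2 w) ->
  (forall w, continuous xi11 w) -> (forall w, continuous xi12 w) -> (forall w, continuous xi2 w) ->
  pref = l0 ^ 4 / eta * s ^ 2 ->
  (forall om u1 u2, (t1 om + t2 om) / 2
     + (- (u1 * xi11 om + u2 * xi12 om) + (u1 ^ 2 + u2 ^ 2) / 2 * xi2 om) = Phi om u1 u2) ->
  lead_term pref t1 t2 xi11 xi12 xi2 a b
  = CInt (fun om => Cmult (RtoC (om ^ 2 * l0 ^ 4 / eta))
            (Cmult (fresnel_probe_integral s Phi om) (fresnel_probe_integral s Phi om))) a b.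
Proof.
  intros He C1 C2 C3 C4 C5 Hpref HPhi. unfold lead_term.
  rewrite <- CInt_Cmult.
  2:{ apply ex_RInt_continuous. intros w _. continuity; try apply continuous_calG_of; auto. }
  apply (RInt_ext (V := C_R_CompleteNormedModule)). intros om _.
  rewrite (fresnel_probe_integral_calG s Phi ((t1 om + t2 om) / 2) (xi11 om) (xi12 om) (xi2 om) om)
    by apply HPhi.
  rewrite (Cmult_assoc (cexpi (t1 om))), cexpi_add.
  replace (t1 om + t2 om) with ((t1 om + t2 om) / 2 + (t1 om + t2 om) / 2) at 1 by field.
  rewrite <- cexpi_add. subst pref.
  generalize (cexpi ((t1 om + t2 om) / 2)) (calG (xi11 om) (xi12 om) (xi2 om)). intros [e1 e2] [g1 g2].
  apply injective_projections; simpl; field; lra.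
Qed.

Lemma kernel_const_nonneg (b c cs kz ky zp1 zp2 zpar yp1 yp2 ypar l0 : R) :
  0 <= b -> 0 < c -> 0 < cs -> 0 < zpar -> 0 < ypar ->
  0 <= kernel_const b c cs kz ky zp1 zp2 zpar yp1 yp2 ypar l0.
Proof.
  intros. pose proof PI_RGT_0. unfold kernel_const.
  apply Rplus_le_le_0_compat; apply Rdiv_le_0_compat;
    (apply fresnel_const_nonneg; lra) || (apply Rmult_lt_0_compat; lra).
Qed.

Lemma fresnel_amplitude_le (kz ky Nz Ny zpar ypar : R) :
  0 < kz -> 0 < ky -> 0 < zpar -> 0 < ypar -> kz * zpar <= Nz -> ky * ypar <= Ny ->
  Rabs (kz / Nz * (ky / Ny) / (16 * PI ^ 2)) <= / (16 * PI ^ 2 * zpar * ypar).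
Proof.
  intros Hkz Hky Hz Hy HzN HyN. pose proof PI_RGT_0.
  assert (Hsz : 0 < kz / Nz <= / zpar) by (apply Rdiv_le_inv; lra).
  assert (Hsy : 0 < ky / Ny <= / ypar) by (apply Rdiv_le_inv; lra).
  assert (H16 : 0 < / (16 * PI ^ 2)) by (apply Rinv_0_lt_compat; pose proof (pow_lt PI 2 H); lra).
  replace (/ (16 * PI ^ 2 * zpar * ypar)) with (/ zpar * / ypar * / (16 * PI ^ 2))
    by (field; repeat split; lra).
  unfold Rdiv at 3. rewrite Rabs_right by (apply Rle_ge; apply Rmult_le_pos; nra).
  apply Rmult_le_compat_r; [lra|]. apply Rmult_le_compat; lra.
Qed.

Definition psf_error_bound (a b l0 zpar ypar E : R) : R :=
  (b - a) * (b ^ 2 * l0 ^ 4 * (4 * E) * (8 * / (16 * PI ^ 2 * zpar * ypar) + 4 * E)).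

Lemma psf_error_bound_nonneg (a b l0 zpar ypar E : R) : a <= b -> 0 < zpar -> 0 < ypar -> 0 <= E ->
  0 <= psf_error_bound a b l0 zpar ypar E.
Proof.
  intros Hab Hz Hy HE. unfold psf_error_bound. pose proof PI_RGT_0.
  assert (0 <= / (16 * PI ^ 2 * zpar * ypar))
    by (apply Rlt_le, Rinv_0_lt_compat; pose proof (pow_lt PI 2 H);
        apply Rmult_lt_0_compat; [apply Rmult_lt_0_compat|]; lra).
  assert (0 <= l0 ^ 4) by (replace (l0 ^ 4) with ((l0 ^ 2) ^ 2) by ring; apply pow2_ge_0).
  pose proof (pow2_ge_0 b).
  apply Rmult_le_pos; [lra|]. apply Rmult_le_pos; [|lra].
  apply Rmult_le_pos; [apply Rmult_le_pos|]; lra.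
Qed.

Lemma psf_sub_lead_term_le (c cs l0 a b zp1 zp2 zpar yp1 yp2 ypar kz ky eta Nz Ny pref : R)
    (t1 t2 xi11 xi12 xi2 : R -> R) :
  0 < c -> 0 < cs -> 0 < l0 -> 0 < a -> a < b -> 0 < zpar -> 0 < ypar -> 0 < kz -> 0 < ky ->
  0 < eta <= 1 ->
  Nz = norm3 (parax eta (kz ^ 2 * zp1) (kz ^ 2 * zp2) (kz * zpar)) ->
  Ny = norm3 (parax eta (ky ^ 2 * yp1) (ky ^ 2 * yp2) (ky * ypar)) ->
  (forall w, continuous t1 w) -> (forall w, continuous t2 w) ->
  (forall w, continuous xi11 w) -> (forall w, continuous xi12 w) -> (forall w, continuous xi2 w) ->
  pref = l0 ^ 4 / eta * (kz / Nz * (ky / Ny) / (16 * PI ^ 2)) ^ 2 ->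
  (forall om u1 u2, (t1 om + t2 om) / 2
     + (- (u1 * xi11 om + u2 * xi12 om) + (u1 ^ 2 + u2 ^ 2) / 2 * xi2 om)
     = fresnel_phase eta om c kz zp1 zp2 Nz l0 u1 u2 - fresnel_phase eta om cs ky yp1 yp2 Ny l0 u1 u2) ->
  Cmod (Cminus
    (psf c cs (sqrt eta * l0) (a / eta) (b / eta) (parax eta zp1 zp2 zpar) (parax eta yp1 yp2 ypar))
    (lead_term pref t1 t2 xi11 xi12 xi2 a b))
  <= psf_error_bound a b l0 zpar ypar (kernel_const b c cs kz ky zp1 zp2 zpar yp1 yp2 ypar l0).
Proof.
  intros Hc Hcs Hl0 Ha Hab Hz Hy Hkz Hky He HNz HNy C1 C2 C3 C4 C5 Hpref HPhi.
  pose proof PI_RGT_0.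
  assert (0 < Nz) by (subst; apply norm3_parax_pos; nra).
  assert (0 < Ny) by (subst; apply norm3_parax_pos; nra).
  set (s := kz / Nz * (ky / Ny) / (16 * PI ^ 2)).
  set (Phi := fun om u1 u2 =>
    fresnel_phase eta om c kz zp1 zp2 Nz l0 u1 u2 - fresnel_phase eta om cs ky yp1 yp2 Ny l0 u1 u2).
  rewrite psf_rescaled by (simpl; lra).
  rewrite (lead_term_eq pref s l0 eta a b t1 t2 xi11 xi12 xi2 Phi) by (auto; lra).
  unfold probe_integral, fresnel_probe_integral, psf_error_bound.
  apply (weighted_probe_sqr_sub_le
    (fun om u1 u2 => psf_kernel c cs (parax eta zp1 zp2 zpar) (parax eta yp1 yp2 ypar)
                       (om / eta) (sqrt eta * l0 * u1) (sqrt eta * l0 * u2))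
    (fun om u1 u2 => Cmult (RtoC s) (cexpi (Phi om u1 u2)))).
  - lra.
  - lra.
  - apply kernel_const_nonneg; lra.
  - apply jointly_continuous_rescaled_kernel; simpl; lra.
  - intros p. unfold Phi, fresnel_phase. continuity; unfold Rdiv;
      repeat first [apply Rmult_integral_contrapositive_currified | apply Rinv_neq_0_compat]; lra.
  - intros om u1 u2 Hom Hu1 Hu2. subst Nz Ny.
    apply psf_kernel_fresnel_approx; try apply Rabs_le; lra.
  - intros om u1 u2 _ _ _. rewrite Cmod_mult, Cmod_cexpi, Cmod_R, Rmult_1_r.
    apply fresnel_amplitude_le; try lra; subst; apply norm3_parax_ge; nra.
Qed.

Lemma psf_sub_lead1_le (c cs l0 a b zp1 zp2 zpar yp1 yp2 ypar eta : R) :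
  0 < c -> 0 < cs -> 0 < l0 -> 0 < a -> a < b -> 0 < zpar -> 0 < ypar -> 0 < eta <= 1 ->
  Cmod (Cminus
    (psf c cs (sqrt eta * l0) (a / eta) (b / eta) (parax eta zp1 zp2 zpar) (parax eta yp1 yp2 ypar))
    (lead1 eta c cs l0 a b zp1 zp2 zpar yp1 yp2 ypar))
  <= psf_error_bound a b l0 zpar ypar (kernel_const b c cs 1 (c / cs) zp1 zp2 zpar yp1 yp2 ypar l0).
Proof.
  intros Hc Hcs Hl0 Ha Hab Hz Hy He. pose proof PI_RGT_0.
  assert (0 < c / cs) by (apply Rdiv_lt_0_compat; lra).
  assert (0 < norm3 (parax eta zp1 zp2 zpar)) by (apply norm3_parax_pos; lra).
  assert (0 < norm3 (phi_c eta c cs yp1 yp2 ypar)) by (apply norm3_parax_pos; nra).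
  unfold lead1. cbv zeta.
  eapply (psf_sub_lead_term_le c cs l0 a b zp1 zp2 zpar yp1 yp2 ypar 1 (c / cs) eta); try lra.
  - now rewrite pow1, !Rmult_1_l.
  - reflexivity.
  all: try (intros w; continuity; lra).
  all: unfold phi_c in *; set (nz := norm3 (parax eta zp1 zp2 zpar)) in *;
       set (nph := norm3 (parax eta ((c / cs) ^ 2 * yp1) ((c / cs) ^ 2 * yp2) (c / cs * ypar))) in *.
  - field. repeat split; lra.
  - intros om u1 u2. unfold fresnel_phase. field. repeat split; lra.
Qed.

Lemma psf_sub_lead2_le (c cs l0 a b zp1 zp2 zpar yp1 yp2 ypar eta : R) :
  0 < c -> 0 < cs -> 0 < l0 -> 0 < a -> a < b -> 0 < zpar -> 0 < ypar -> 0 < eta <= 1 ->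
  Cmod (Cminus
    (psf c cs (sqrt eta * l0) (a / eta) (b / eta) (parax eta zp1 zp2 zpar) (parax eta yp1 yp2 ypar))
    (lead2 eta c cs l0 a b zp1 zp2 zpar yp1 yp2 ypar))
  <= psf_error_bound a b l0 zpar ypar (kernel_const b c cs (cs / c) 1 zp1 zp2 zpar yp1 yp2 ypar l0).
Proof.
  intros Hc Hcs Hl0 Ha Hab Hz Hy He. pose proof PI_RGT_0.
  assert (0 < cs / c) by (apply Rdiv_lt_0_compat; lra).
  assert (0 < norm3 (parax eta yp1 yp2 ypar)) by (apply norm3_parax_pos; lra).
  assert (0 < norm3 (phi_c_inv eta c cs zp1 zp2 zpar)) by (apply norm3_parax_pos; nra).
  unfold lead2. cbv zeta.
  eapply (psf_sub_lead_term_le c cs l0 a b zp1 zp2 zpar yp1 yp2 ypar (cs / c) 1 eta); try lra.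
  - reflexivity.
  - now rewrite pow1, !Rmult_1_l.
  all: try (intros w; continuity; lra).
  all: unfold phi_c_inv in *; set (ny := norm3 (parax eta yp1 yp2 ypar)) in *;
       set (nps := norm3 (parax eta ((cs / c) ^ 2 * zp1) ((cs / c) ^ 2 * zp2) (cs / c * zpar))) in *.
  - field. repeat split; lra.
  - intros om u1 u2. unfold fresnel_phase. field. repeat split; lra.
Qed.

Theorem mainTheorem1 (c cs l0 a b zp1 zp2 zpar yp1 yp2 ypar : R) :
  0 < c -> 0 < cs -> 0 < l0 -> 0 < a -> a < b -> 0 < zpar -> 0 < ypar ->
  exists C0 : R, exists eta0 : R, 0 < eta0 /\
    forall eta : R, 0 < eta < eta0 ->
      let F := psf c cs (sqrt eta * l0) (a / eta) (b / eta)
                   (parax eta zp1 zp2 zpar) (parax eta yp1 yp2 ypar) in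
      Cmod (Cminus F (lead1 eta c cs l0 a b zp1 zp2 zpar yp1 yp2 ypar)) <= C0 /\
      Cmod (Cminus F (lead2 eta c cs l0 a b zp1 zp2 zpar yp1 yp2 ypar)) <= C0.
Proof.
  intros Hc Hcs Hl0 Ha Hab Hz Hy.
  set (C1 := psf_error_bound a b l0 zpar ypar
               (kernel_const b c cs 1 (c / cs) zp1 zp2 zpar yp1 yp2 ypar l0)).
  set (C2 := psf_error_bound a b l0 zpar ypar
               (kernel_const b c cs (cs / c) 1 zp1 zp2 zpar yp1 yp2 ypar l0)).
  assert (HC : 0 <= C1 /\ 0 <= C2)
    by (split; apply psf_error_bound_nonneg, kernel_const_nonneg; lra).
  exists (C1 + C2), 1. split; [lra|]. intros eta He F. split.
  - apply Rle_trans with C1; [apply psf_sub_lead1_le|]; lra.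
  - apply Rle_trans with C2; [apply psf_sub_lead2_le|]; lra.
Qed.
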